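(* Let $1\le r\le\infty$ and let $P=U(\mathbb R^p)$ and $Q=V(\mathbb R^q)$ be nonzero linear subspaces of $\mathbb R^n$, where $U\in\mathbb R^{n\times p}$ and $V\in\mathbb R^{n\times q}$ have orthonormal columns. Let $\theta_{\max}(P,Q)\in[0,\pi/2]$ be defined by $\cos\theta_{\max}(P,Q)=\sigma_{\min}(V^\top U)$, the smallest singular value of $V^\top U$. Then $${\rm Dis}_r(P,Q)=2\left\|\left(\tfrac{\sqrt2}{2},\ \sin\left[\tfrac{\theta_{\max}(P,Q)}{2}\right]\right)\right\|_r\quad\text{if } p\ne q,$$ $${\rm Dis}_r(P,Q)=2\|(1,1)\|_r\,\sin\left[\tfrac{\theta_{\max}(P,Q)}{2}\right]\quad\text{if } p=q.$$
   Context: $S_n$ is the unit sphere of $\mathbb R^n$. For nonzero closed convex cones $P,Q$: $\Theta(P,Q):=\max_{u\in P\cap S_n}\min_{v\in Q\cap S_n}\arccos\langle u,v\rangle$ and ${\rm Dis}_r(P,Q):=2\left\|\left(\sin[\Theta(P,Q)/2],\ \sin[\Theta(Q,P)/2]\right)\right\|_r$, where $\|\cdot\|_r$ is the $\ell^r$-norm on $\mathbb R^2$. (Equivalently ${\rm Dis}_r(P,Q)=\|(\Lambda(P\cap S_n,Q\cap S_n),\Lambda(Q\cap S_n,P\cap S_n))\|_r$ with $\Lambda(C,D)=\max_{x\in C}\min_{y\in D}\|x-y\|$.) $\theta_{\max}(P,Q)$ is the largest principal angle between $P$ and $Q$. *)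

From HB Require Import structures.
From mathcomp Require Import all_boot all_order all_algebra.
From mathcomp Require Import all_classical all_reals all_analysis.
Set Implicit Arguments. Unset Strict Implicit. Unset Printing Implicit Defensive.
Import Order.TTheory GRing.Theory Num.Theory.
Local Open Scope classical_set_scope.
Local Open Scope ring_scope.

Section Defs.
Variable R : realType.

Definition dotv (n : nat) (u v : 'cV[R]_n) : R := (u^T *m v) 0 0.

Definition unit_sphere (n : nat) : set 'cV[R]_n := [set u | dotv u u = 1].

Definition colspan (n p : nat) (U : 'M[R]_(n, p)) : set 'cV[R]_n :=
  [set u | exists x : 'cV[R]_p, u = U *m x].

(* Theta(P,Q) = max_{u in P cap S_n} min_{v in Q cap S_n} arccos <u,v>
   (max/min are attained by compactness; written as sup/inf). *)
Definition Theta (n : nat) (P Q : set 'cV[R]_n) : R :=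
  sup [set inf [set acos (dotv u v) | v in Q `&` @unit_sphere n]
      | u in P `&` @unit_sphere n].

(* l^r norm on R^2, r in [1, +oo] (the -oo case is never used). *)
Definition lrnorm2 (r : \bar R) (a b : R) : R :=
  match r with
  | EFin s => powR (powR `|a| s + powR `|b| s) s^-1
  | _ => Num.max `|a| `|b|
  end.

Definition Dis (n : nat) (r : \bar R) (P Q : set 'cV[R]_n) : R :=
  2 * lrnorm2 r (sin (Theta P Q / 2)) (sin (Theta Q P / 2)).

(* Smallest singular value of a q x p matrix A: the square root of the
   smallest eigenvalue of the Gram matrix of size min(p,q). *)
Definition sigma_min (q p : nat) (A : 'M[R]_(q, p)) : R :=
  if (q <= p)%N then Num.sqrt (inf [set a | eigenvalue (A *m A^T) a])
  else Num.sqrt (inf [set a | eigenvalue (A^T *m A) a]).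

Definition theta_max (n p q : nat) (U : 'M[R]_(n, p)) (V : 'M[R]_(n, q)) : R :=
  acos (sigma_min (V^T *m U)).

End Defs.

From HB Require Import structures.
From mathcomp Require Import all_boot all_order all_algebra.
From mathcomp Require Import all_classical all_reals all_analysis.
From mathcomp Require Import ring lra.
Set Implicit Arguments. Unset Strict Implicit. Unset Printing Implicit Defensive.
Import Order.TTheory GRing.Theory Num.Theory.
Local Open Scope classical_set_scope.
Local Open Scope ring_scope.

(* Put A := V^T U. For a unit vector U x of P, the closest unit vector of Q
   is the normalised projection V (A x) / |A x|, so the angle from U x to Q is
   acos |A x|. Maximising over x gives Theta(P,Q) = acos sqrt(lambda_min(A^T A)),
   because the minimum of the Rayleigh quotient of the Gram matrix A^T A is
   attained and is its smallest eigenvalue; symmetrically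
   Theta(Q,P) = acos sqrt(lambda_min(A A^T)). If p <> q, the larger of the two
   Gram matrices is singular since rank A <= min(p,q), so the corresponding
   angle is pi/2 and contributes sin(pi/4) = sqrt 2 / 2, while the other is
   theta_max. If p = q, A^T A and A A^T have the same smallest eigenvalue, so
   both angles equal theta_max. *)

Section SupInf.
Variable R : realType.
Implicit Types (E : set R) (x : R).

Lemma sup_attained E x : E x -> ubound E x -> sup E = x.
Proof.
move=> Ex ubx; apply/eqP; rewrite eq_le ge_sup //=; last by exists x.
by apply: sup_upper_bound => //; split; exists x.
Qed.

Lemma inf_attained E x : E x -> lbound E x -> inf E = x.
Proof.
move=> Ex lbx; apply/eqP; rewrite eq_le lb_le_inf ?andbT //; last by exists x.
by apply: ge_inf => //; exists x.
Qed.

End SupInf.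

Section InnerProduct.
Variable R : realType.
Implicit Types (m : nat) (a : R).

Lemma dotvE m (u v : 'cV[R]_m) : dotv u v = \sum_i u i 0 * v i 0.
Proof. by rewrite /dotv mxE; apply: eq_bigr => i _; rewrite mxE. Qed.

Lemma dotvC m (u v : 'cV[R]_m) : dotv u v = dotv v u.
Proof. by rewrite !dotvE; apply: eq_bigr => i _; rewrite mulrC. Qed.

Lemma dotvDl m (u w v : 'cV[R]_m) : dotv (u + w) v = dotv u v + dotv w v.
Proof. by rewrite !dotvE -big_split; apply: eq_bigr => i _; rewrite mxE mulrDl. Qed.

Lemma dotvZl m a (u v : 'cV[R]_m) : dotv (a *: u) v = a * dotv u v.
Proof. by rewrite !dotvE mulr_sumr; apply: eq_bigr => i _; rewrite mxE mulrA. Qed.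

Lemma dotvNl m (u v : 'cV[R]_m) : dotv (- u) v = - dotv u v.
Proof. by rewrite -scaleN1r dotvZl mulN1r. Qed.

Lemma dotv0l m (v : 'cV[R]_m) : dotv 0 v = 0.
Proof. by rewrite -(scale0r 0) dotvZl mul0r. Qed.

Lemma dotvDr m (u w v : 'cV[R]_m) : dotv v (u + w) = dotv v u + dotv v w.
Proof. by rewrite dotvC dotvDl !(dotvC v). Qed.

Lemma dotvZr m a (u v : 'cV[R]_m) : dotv v (a *: u) = a * dotv v u.
Proof. by rewrite dotvC dotvZl dotvC. Qed.

Lemma dotvNr m (u v : 'cV[R]_m) : dotv v (- u) = - dotv v u.
Proof. by rewrite dotvC dotvNl dotvC. Qed.

Lemma dotv_mulmxl k m (M : 'M[R]_(k, m)) u v : dotv (M *m u) v = dotv u (M^T *m v).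
Proof. by rewrite /dotv trmx_mul mulmxA. Qed.

Lemma dotv_ge0 m (u : 'cV[R]_m) : 0 <= dotv u u.
Proof. by rewrite dotvE; apply: sumr_ge0 => i _; rewrite -expr2 sqr_ge0. Qed.

Lemma dotv_eq0 m (u : 'cV[R]_m) : (dotv u u == 0) = (u == 0).
Proof.
apply/idP/eqP => [|->]; last by rewrite dotv0l.
rewrite dotvE psumr_eq0 => [/allP u0|i _]; last by rewrite -expr2 sqr_ge0.
apply/matrixP => i j; rewrite (ord1 j) mxE.
by have := u0 i (mem_index_enum _); rewrite /= -expr2 sqrf_eq0 => /eqP.
Qed.

Lemma dotv_gt0 m (u : 'cV[R]_m) : (0 < dotv u u) = (u != 0).
Proof. by rewrite lt_def dotv_ge0 andbT dotv_eq0. Qed.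

Lemma nonzero_vector_scaled_unit m (u : 'cV[R]_m) : u != 0 ->
  exists2 c : R, 0 < c & exists2 x, dotv x x = 1 & u = c *: x.
Proof.
rewrite -dotv_gt0 => uu0; have c0 : 0 < Num.sqrt (dotv u u) by rewrite sqrtr_gt0.
exists (Num.sqrt (dotv u u)) => //; exists ((Num.sqrt (dotv u u))^-1 *: u).
  rewrite dotvZl dotvZr mulrA -expr2 exprVn sqr_sqrtr ?dotv_ge0 //.
  by rewrite mulVf ?gt_eqF.
by rewrite scalerA mulfV ?gt_eqF // scale1r.
Qed.

Lemma exists_unit_vector m : (0 < m)%N -> exists x : 'cV[R]_m, dotv x x = 1.
Proof.
move=> m0; exists (delta_mx (Ordinal m0) 0).
by rewrite /dotv trmx_delta mul_delta_mx mxE !eqxx.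
Qed.

Lemma exists_unit_dotv_norm m (a : 'cV[R]_m) : (0 < m)%N ->
  exists2 y, dotv y y = 1 & dotv a y = Num.sqrt (dotv a a).
Proof.
move=> m0; have [->|a0] := eqVneq a 0.
  by have [y y1] := exists_unit_vector m0; exists y; rewrite ?dotv0l ?sqrtr0.
have [c c0 [y y1 ->]] := nonzero_vector_scaled_unit a0; exists y => //.
by rewrite !(dotvZl, dotvZr) y1 !mulr1 -expr2 sqrtr_sqr gtr0_norm.
Qed.

Lemma dotv_sqr_le m (u v : 'cV[R]_m) : dotv u v ^+ 2 <= dotv u u * dotv v v.
Proof.
have [->|v0] := eqVneq v 0; first by rewrite dotv0l (dotvC u) dotv0l mulr0 expr0n.
have := dotv_ge0 (dotv v v *: u - dotv u v *: v).
rewrite dotvDl !dotvDr !dotvNl !dotvNr !dotvZl !dotvZr (dotvC v u).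
have := dotv_gt0 v; rewrite v0 => vv0; nra.
Qed.

Lemma dotv_norm_le m (u v : 'cV[R]_m) :
  `|dotv u v| <= Num.sqrt (dotv u u) * Num.sqrt (dotv v v).
Proof.
by rewrite -sqrtrM ?dotv_ge0 // -sqrtr_sqr ler_sqrt ?dotv_sqr_le // mulr_ge0 ?dotv_ge0.
Qed.

Lemma dotv_isometry n p (U : 'M[R]_(n, p)) (x y : 'cV[R]_p) :
  U^T *m U = 1%:M -> dotv (U *m x) (U *m y) = dotv x y.
Proof. by move=> hU; rewrite dotv_mulmxl mulmxA hU mul1mx. Qed.

Lemma trmx_isometry_contract n q (V : 'M[R]_(n, q)) (w : 'cV[R]_n) :
  V^T *m V = 1%:M -> dotv (V^T *m w) (V^T *m w) <= dotv w w.
Proof.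
move=> hV; set a := V^T *m w.
have := dotv_sqr_le (V *m a) w; rewrite dotv_isometry // dotv_mulmxl -/a.
have := dotv_ge0 a; have := dotv_ge0 w; nra.
Qed.

End InnerProduct.

Section Quadratic.
Variable R : realType.

Lemma unit_quad_form_le m (C : 'M[R]_m) (y : 'cV[R]_m) : dotv y y = 1 ->
  dotv y (C *m y) <= \sum_i \sum_j `|C i j|.
Proof.
move=> y1; have yi_le1 i : `|y i 0| <= 1.
  have : y i 0 ^+ 2 <= 1.
    rewrite -y1 dotvE (bigD1 i) //= -expr2 lerDl.
    by apply: sumr_ge0 => j _; rewrite -expr2 sqr_ge0.
  by rewrite -real_normK ?num_real // expr_le1.
rewrite dotvE; apply: ler_sum => i _; rewrite mxE mulr_sumr.
apply: ler_sum => j _; apply: le_trans (ler_norm _) _.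
by rewrite !normrM mulrCA ler_piMr ?mulr_ile1 ?normr_ge0.
Qed.

(* If [B] were invertible, [z := B^-T y] for an almost isotropic unit [y]
   would give a negative value of the form on [z - t y] for [t] large. *)
Lemma sym_psd_not_unitmx m (B : 'M[R]_m) : B^T = B ->
  (forall x, 0 <= dotv x (B *m x)) ->
  (forall e, 0 < e -> exists2 y, dotv y y = 1 & dotv y (B *m y) < e) ->
  B \notin unitmx.
Proof.
move=> Bsym psdB small; apply/negP => Bu.
set C := (invmx B)^T; pose K : R := \sum_i \sum_j `|C i j|; pose t : R := K + 1.
have K0 : 0 <= K by do 2!(apply: sumr_ge0 => ? _).
have [|y y1 yBy] := small t^-1; first by rewrite invr_gt0 ltr_wpDl.
have BC : B *m C = 1%:M by rewrite -[B in B *m _]Bsym -trmx_mul mulVmx // trmx1.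
have zBy : dotv (C *m y) (B *m y) = 1.
  by rewrite dotv_mulmxl trmxK mulmxA mulVmx // mul1mx.
have yBz : dotv y (B *m (C *m y)) = 1 by rewrite mulmxA BC mul1mx.
have zBz : dotv (C *m y) (B *m (C *m y)) <= K.
  by rewrite mulmxA BC mul1mx dotvC unit_quad_form_le.
have t0 : 0 < t by rewrite ltr_wpDl.
have bt : dotv y (B *m y) * t < 1 by rewrite -ltr_pdivlMr // div1r.
have := psdB (C *m y - t *: y).
rewrite mulmxBr -scalemxAr dotvDl !dotvDr !dotvNl !dotvNr !dotvZl !dotvZr zBy yBz.
have : t * (dotv y (B *m y) * t) < t by rewrite -[X in _ < X]mulr1 ltr_pM2l.
clear Bsym BC; rewrite /t in t0 bt zBz *; nra.
Qed.

End Quadratic.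

Definition mineig (R : realType) m (M : 'M[R]_m) : R := inf [set a | eigenvalue M a].

Section GramMatrix.
Variable R : realType.
Variables (k m : nat) (A : 'M[R]_(k, m)).
Hypothesis m_gt0 : (0 < m)%N.

Let mu := inf [set dotv (A *m x) (A *m x) | x in @unit_sphere R m].

Lemma dotv_gram x : dotv x (A^T *m A *m x) = dotv (A *m x) (A *m x).
Proof. by rewrite dotv_mulmxl mulmxA. Qed.

Let rayleigh_nonempty : [set dotv (A *m x) (A *m x) | x in @unit_sphere R m] !=set0.
Proof. by have [x x1] := exists_unit_vector R m_gt0; exists (dotv (A *m x) (A *m x)), x. Qed.

Let rayleigh_lb : lbound [set dotv (A *m x) (A *m x) | x in @unit_sphere R m] 0.
Proof. by move=> _ [x _ <-]; exact: dotv_ge0. Qed.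

Let mu_ge0 : 0 <= mu.
Proof. exact: lb_le_inf. Qed.

Let mu_le x : mu * dotv x x <= dotv (A *m x) (A *m x).
Proof.
have [->|x0] := eqVneq x 0; first by rewrite mulmx0 !dotv0l mulr0.
have [c c0 [y y1 ->]] := nonzero_vector_scaled_unit x0.
rewrite -scalemxAr !(dotvZl, dotvZr) y1 mulr1 [mu * _]mulrC mulrA ler_pM2l ?mulr_gt0 //.
by apply: ge_inf; [exists 0 | exists y].
Qed.

Let gram_sym : (A^T *m A)^T = A^T *m A.
Proof. by rewrite trmx_mul trmxK. Qed.

Let eigenvector_col l (v : 'rV_m) :
  v *m (A^T *m A) = l *: v -> A^T *m A *m v^T = l *: v^T.
Proof.
by move=> vG; rewrite -gram_sym -trmx_mul vG linearZ.
Qed.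

Let eigenvalue_ge l : eigenvalue (A^T *m A) l -> mu <= l.
Proof.
move=> /eigenvalueP[v /eigenvector_col Gv v0].
have := mu_le v^T; rewrite -dotv_gram Gv dotvZr ler_pM2r //.
by rewrite dotv_gt0 trmx_eq0.
Qed.

Let mu_eigenvalue : eigenvalue (A^T *m A) mu.
Proof.
rewrite /eigenvalue /eigenspace kermx_eq0 row_free_unit.
apply: sym_psd_not_unitmx => [|x|e e0].
- by rewrite linearB /= gram_sym tr_scalar_mx.
- by rewrite mulmxBl mul_scalar_mx dotvDr dotvNr dotvZr dotv_gram subr_ge0.
have [_ [y y1 <-] ltye] := inf_adherent e0 (conj rayleigh_nonempty (ex_intro _ 0 rayleigh_lb)).
exists y => //; rewrite mulmxBl mul_scalar_mx dotvDr dotvNr dotvZr dotv_gram.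
by rewrite y1 mulr1 ltrBlDl.
Qed.

Let mineig_gramE : mineig (A^T *m A) = mu.
Proof. exact: inf_attained mu_eigenvalue eigenvalue_ge. Qed.

Lemma mineig_gram_ge0 : 0 <= mineig (A^T *m A).
Proof. by rewrite mineig_gramE; exact: mu_ge0. Qed.

Lemma mineig_gram_le x : mineig (A^T *m A) * dotv x x <= dotv (A *m x) (A *m x).
Proof. by rewrite mineig_gramE; exact: mu_le. Qed.

Lemma mineig_gram_eigenvector :
  exists2 x, dotv x x = 1 & A^T *m A *m x = mineig (A^T *m A) *: x.
Proof.
rewrite mineig_gramE; have /eigenvalueP[v vG v0] := mu_eigenvalue.
have [|c c0 [x x1 vx]] := @nonzero_vector_scaled_unit R m v^T; first by rewrite trmx_eq0.
exists x => //; apply: (@scalerI _ _ c); first by rewrite gt_eqF.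
by rewrite scalemxAr scalerA [c * _]mulrC -scalerA -vx; apply: eigenvector_col.
Qed.

End GramMatrix.

Section GramRank.
Variable R : realType.

Lemma rank_lt_kernel_row k m (M : 'M[R]_(k, m)) : (\rank M < k)%N ->
  exists2 w : 'rV_k, w != 0 & w *m M = 0.
Proof.
move=> rMk; have /rowV0Pn[w /sub_kermxP wM w0] : kermx M != 0.
  by rewrite -mxrank_eq0 mxrank_ker subn_eq0 -ltnNge.
by exists w.
Qed.

Lemma mineig_gram_rank k m (B : 'M[R]_(k, m)) : (\rank B < m)%N ->
  mineig (B^T *m B) = 0.
Proof.
move=> rBm; have m0 : (0 < m)%N by apply: leq_ltn_trans rBm.
have [w w0 wBt] : exists2 w : 'rV_m, w != 0 & w *m B^T = 0.
  by apply: rank_lt_kernel_row; rewrite mxrank_tr.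
have Bw : B *m w^T = 0 by rewrite -[B]trmxK -trmx_mul wBt trmx0.
apply/eqP; rewrite eq_le mineig_gram_ge0 // andbT.
have := mineig_gram_le B m0 w^T; rewrite Bw dotv0l pmulr_lle0 //.
by rewrite dotv_gt0 trmx_eq0.
Qed.

(* For an eigenvector [x] of [A^T A], [A x] is an eigenvector of [A A^T] with
   the same eigenvalue, unless [A x = 0], in which case [A] is singular. *)
Lemma mineig_gram_tr_le m (A : 'M[R]_m) : (0 < m)%N ->
  mineig (A *m A^T) <= mineig (A^T *m A).
Proof.
move=> m0; have [x x1 Gx] := mineig_gram_eigenvector A m0.
set mu := mineig (A^T *m A) in Gx *.
have Ax : dotv (A *m x) (A *m x) = mu by rewrite -dotv_gram Gx dotvZr x1 mulr1.
have := mineig_gram_ge0 A m0; rewrite le_eqVlt => /orP[/eqP mu0|mu_gt0].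
  have Ax0 : A *m x = 0 by apply/eqP; rewrite -dotv_eq0 Ax mu0.
  have rAt : (\rank A^T < m)%N.
    rewrite mxrank_tr ltn_neqAle rank_leq_col andbT.
    apply/eqP => rAm; have Au : A \in unitmx by rewrite -row_free_unit /row_free rAm.
    by move: x1; rewrite -[x](mulKmx Au) Ax0 mulmx0 dotv0l => /eqP; rewrite eq_sym oner_eq0.
  by rewrite -[A in A *m _]trmxK mineig_gram_rank // mineig_gram_ge0.
have := mineig_gram_le A^T m0 (A *m x).
by rewrite trmxK mulmxA Gx dotvZl dotvZr x1 Ax mulr1 ler_pM2r.
Qed.

Lemma mineig_gram_tr m (A : 'M[R]_m) : (0 < m)%N ->
  mineig (A *m A^T) = mineig (A^T *m A).
Proof.
move=> m0; apply/eqP; rewrite eq_le mineig_gram_tr_le //=.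
by have := mineig_gram_tr_le A^T m0; rewrite trmxK.
Qed.

End GramRank.

Section Trigonometry.
Variable R : realType.

Lemma le_acos (a b : R) : -1 <= a -> a <= b -> b <= 1 -> acos b <= acos a.
Proof.
move=> a_ge ab b_le; rewrite leNgt; apply/negP => ltba.
have ia : a \in `[(-1), 1] by rewrite in_itv /=; apply/andP; split => //; lra.
have ib : b \in `[(-1), 1] by rewrite in_itv /=; apply/andP; split => //; lra.
have ja : acos a \in `[0, pi] by rewrite in_itv /= acos_ge0 ?acos_lepi //; lra.
have jb : acos b \in `[0, pi] by rewrite in_itv /= acos_ge0 ?acos_lepi //; lra.
by have := ltr_cos ja jb; rewrite ltba acosK // acosK // => /esym; lra.
Qed.

Lemma sin_half_acos_ge0 (x : R) : -1 <= x <= 1 -> 0 <= sin (acos x / 2).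
Proof.
move=> hx; have := acos_ge0 hx; have := acos_lepi hx.
by move=> ? ?; apply: sin_ge0_pi; apply/andP; split; lra.
Qed.

Lemma sin_half_acos0 : sin (acos 0 / 2) = Num.sqrt 2 / 2 :> R.
Proof.
rewrite acos0; set a := pi / 2%:R / 2.
have cos_sin : cos a = sin a.
  by rewrite -cosBpihalf (_ : a - pi / 2 = - a) ?cosN //; rewrite /a; field.
have sin_ge0 : 0 <= sin a.
  by apply: sin_ge0_pi; have := pi_ge0 R; rewrite /a => ?; apply/andP; split; lra.
apply/eqP; rewrite -(eqrXn2 (n := 2)) ?divr_ge0 //.
have := cos2Dsin2 a; rewrite cos_sin expr_div_n sqr_sqrtr // => sin2.
have -> : 2 / 2 ^+ 2 = 2^-1 :> R by field.
by move: sin2; set s := sin a ^+ 2 => sin2; apply/eqP; lra.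
Qed.

End Trigonometry.

Section LrNorm.
Variable R : realType.
Implicit Types (r : \bar R) (a b : R).

Lemma lrnorm2C r a b : lrnorm2 r a b = lrnorm2 r b a.
Proof. by case: r => [t||] /=; rewrite (addrC, maxC). Qed.

Lemma lrnorm2_diag r a : r != 0%E -> 0 <= a -> lrnorm2 r a a = lrnorm2 r 1 1 * a.
Proof.
move=> r0 a0; case: r r0 => [t||] /= r0; rewrite normr1 ?maxxx ?mul1r ?ger0_norm //.
rewrite eqe in r0; rewrite powR1 -!mulr2n -mulr_natl powRM ?powR_ge0 //.
by rewrite -powRrM mulfV // powRr1.
Qed.
End LrNorm.

Section PrincipalAngle.
Variable R : realType.
Variables (n p q : nat) (U : 'M[R]_(n, p)) (V : 'M[R]_(n, q)).
Hypotheses (p_gt0 : (0 < p)%N) (q_gt0 : (0 < q)%N).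
Hypotheses (U_iso : U^T *m U = 1%:M) (V_iso : V^T *m V = 1%:M).

Let A := V^T *m U.

Let dotv_colspan x y : dotv (U *m x) (V *m y) = dotv (A *m x) y.
Proof. by rewrite /A -mulmxA [RHS]dotv_mulmxl trmxK. Qed.

Let sqrt_proj_le1 x : dotv x x = 1 -> Num.sqrt (dotv (A *m x) (A *m x)) <= 1.
Proof.
move=> x1; rewrite -sqrtr1 ler_sqrt // -mulmxA -x1 -(dotv_isometry _ _ U_iso).
exact: trmx_isometry_contract.
Qed.

Lemma min_angle_to_colspan x : dotv x x = 1 ->
  inf [set acos (dotv (U *m x) v) | v in colspan V `&` @unit_sphere R n]
  = acos (Num.sqrt (dotv (V^T *m U *m x) (V^T *m U *m x))).
Proof.
move=> x1; apply: inf_attained.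
  have [y y1 Axy] := exists_unit_dotv_norm (A *m x) q_gt0.
  exists (V *m y); last by rewrite dotv_colspan Axy.
  by split; [exists y | rewrite /unit_sphere /= dotv_isometry].
move=> a [v [[y ->]]]; rewrite /unit_sphere /= dotv_isometry // => y1 <-.
have := dotv_norm_le (U *m x) (V *m y); rewrite dotv_isometry // dotv_isometry //.
rewrite x1 y1 sqrtr1 mulr1 => /ler_normlP[? _].
apply: le_acos; [by rewrite lerNl | | exact: sqrt_proj_le1].
have := dotv_norm_le (A *m x) y; rewrite y1 sqrtr1 mulr1 -dotv_colspan.
exact: le_trans (ler_norm _).
Qed.

Lemma Theta_colspan : Theta (colspan U) (colspan V) =
  acos (Num.sqrt (mineig ((V^T *m U)^T *m (V^T *m U)))).
Proof.
apply: sup_attained.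
  have [x x1 Gx] := mineig_gram_eigenvector A p_gt0.
  exists (U *m x); first by split; [exists x | rewrite /unit_sphere /= dotv_isometry].
  by rewrite min_angle_to_colspan // -dotv_gram Gx dotvZr x1 mulr1.
move=> a [u [[x ->]]]; rewrite /unit_sphere /= dotv_isometry // => x1 <-.
rewrite min_angle_to_colspan //; apply: le_acos; last exact: sqrt_proj_le1.
  by apply: le_trans (sqrtr_ge0 _); rewrite lerN10.
by rewrite ler_sqrt ?dotv_ge0 // -[X in X <= _]mulr1 -x1 mineig_gram_le.
Qed.

Lemma sqrt_mineig_colspan_le1 :
  Num.sqrt (mineig ((V^T *m U)^T *m (V^T *m U))) <= 1.
Proof.
have [x x1] := exists_unit_vector R p_gt0.
apply: le_trans (sqrt_proj_le1 x1); rewrite ler_sqrt ?dotv_ge0 //.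
by rewrite -[X in X <= _]mulr1 -x1 mineig_gram_le.
Qed.

End PrincipalAngle.

Theorem mainTheorem9 (R : realType) (n p q : nat)
    (U : 'M[R]_(n, p)) (V : 'M[R]_(n, q)) (r : \bar R) :
  (0 < p)%N -> (0 < q)%N ->
  U^T *m U = 1%:M -> V^T *m V = 1%:M ->
  (1 <= r)%E ->
  Dis r (colspan U) (colspan V) =
    if p != q then
      2 * lrnorm2 r (Num.sqrt 2 / 2) (sin (theta_max U V / 2))
    else
      2 * lrnorm2 r 1 1 * sin (theta_max U V / 2).
Proof.
move=> p_gt0 q_gt0 U_iso V_iso r_ge1.
have UtV : U^T *m V = (V^T *m U)^T by rewrite trmx_mul trmxK.
rewrite /Dis /theta_max /sigma_min (Theta_colspan p_gt0 q_gt0 U_iso V_iso).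
rewrite (Theta_colspan q_gt0 p_gt0 V_iso U_iso) UtV trmxK.
rewrite -/(mineig _) -/(mineig _).
set A := V^T *m U.
have [p_lt_q|q_lt_p|p_eq_q] := ltngtP p q.
- have -> : mineig (A *m A^T) = 0.
    rewrite -[A in A *m _]trmxK mineig_gram_rank // mxrank_tr.
    exact: leq_ltn_trans (rank_leq_col A) p_lt_q.
  by rewrite /= sqrtr0 sin_half_acos0 lrnorm2C.
- have -> : mineig (A^T *m A) = 0.
    by rewrite mineig_gram_rank // (leq_ltn_trans (rank_leq_row A) q_lt_p).
  by rewrite /= sqrtr0 sin_half_acos0.
subst q; rewrite /= mineig_gram_tr // lrnorm2_diag ?mulrA //.
  by apply: contraTneq r_ge1 => ->; rewrite lee_fin ler10.
apply: sin_half_acos_ge0; rewrite sqrt_mineig_colspan_le1 // andbT.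
by apply: le_trans (sqrtr_ge0 _); rewrite lerN10.
Qed.
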